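(* For every integer $n\geq 1$, $$A_{2n}(p,q)=(1+p)A_{2n-1}(p,q)+(p+q)\sum_{i=1}^{n-1}\binom{2n-1}{2i-1}A_{2i-1}(p,q)A_{2n-2i}(p,q),$$ $$A_{2n+1}(p,q)=A_{2n}(p,q)+p\sum_{i=0}^{n-1}\binom{2n}{2i}A_{2i}(p,q)A_{2n-2i}(q,p)+q\sum_{i=1}^{n}\binom{2n}{2i-1}A_{2i-1}(p,q)A_{2n-2i+1}(p,q).$$
   Context: For a permutation $\pi=a_1a_2\cdots a_n$ of $[n]=\{1,\dots,n\}$, an index $i\in[n-1]$ is a descent if $a_i>a_{i+1}$. Let $\mathrm{odes}(\pi)$ (resp. $\mathrm{edes}(\pi)$) be the number of descents $i$ of $\pi$ with $i$ odd (resp. even). For $n\ge1$ the refined Eulerian polynomial is $A_n(p,q)=\sum_{\pi\in\mathfrak S_n}p^{\mathrm{odes}(\pi)}q^{\mathrm{edes}(\pi)}$, and $A_0(p,q)=1$. *)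

From HB Require Import structures.
From mathcomp Require Import all_boot all_order all_algebra all_fingroup.
Set Implicit Arguments. Unset Strict Implicit. Unset Printing Implicit Defensive.
Import GRing.Theory.

(* The one-line notation a_1 a_2 ... a_n of s : 'S_n, with values shifted to
   0..n-1 (a_{j+1} = val (s j)); shifting does not affect descents. *)
Definition perm_word (n : nat) (s : 'S_n) : seq nat := [seq val (s i) | i <- enum 'I_n].

(* Number of descents i in [n-1] (1-based) with odd i (resp. even i).
   The 1-based index i corresponds to the 0-based position j = i - 1. *)
Definition odes (n : nat) (s : 'S_n) : nat :=
  let a := perm_word s in
  \sum_(1 <= i < n) ((nth 0 a i.-1 > nth 0 a i) && odd i).
Definition edes (n : nat) (s : 'S_n) : nat :=
  let a := perm_word s in
  \sum_(1 <= i < n) ((nth 0 a i.-1 > nth 0 a i) && ~~ odd i).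

(* Refined Eulerian polynomial A_n(p,q), evaluated at p, q in an arbitrary
   commutative ring (identity for all such evaluations = polynomial identity). *)
Definition A (R : comPzRingType) (n : nat) (p q : R) : R :=
  \sum_(s : 'S_n) p ^+ odes s * q ^+ edes s.

From HB Require Import structures.
From mathcomp Require Import all_boot all_order all_algebra all_fingroup.
From mathcomp Require Import zify ring.
Import GRing.Theory.
Local Open Scope ring_scope.
Set Implicit Arguments. Unset Strict Implicit. Unset Printing Implicit Defensive.

(* A permutation of 0..N is l ++ N :: r, where the values of l form a |l|-subset of 0..N-1 and
   those of r its complement.  Its descents are those of l, those of r shifted by |l| + 1, and
   N > head r at position |l| + 1; only the relative orders inside l and r matter.  Hence
     A_{N+1}(p,q) = A_N(p,q)
       + sum_{k<N} C(N,k) A_k(p,q) (if k is odd then q A_{N-k}(p,q) else p A_{N-k}(q,p)),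
   and splitting k by parity gives the formula for A_{2n+1}.  For A_{2n} the length N = 2n-1 is
   odd; reverse-complementing a permutation of odd length exchanges odd and even descent
   positions, so A_m(p,q) = A_m(q,p) for odd m, and the terms with even k then match those with
   odd k under k -> N - k. *)

Lemma uniq_perm_min_size (T : eqType) (s1 s2 : seq T) :
  uniq s1 -> {subset s1 <= s2} -> (size s2 <= size s1)%N -> perm_eq s1 s2.
Proof.
move=> s1_uniq s12 le_s21; have [_ eq_s12] := uniq_min_size s1_uniq s12 le_s21.
exact: uniq_perm s1_uniq (leq_size_uniq s1_uniq s12 le_s21) eq_s12.
Qed.

Lemma sum_set_card (V : nmodType) N (F : nat -> V) :
  \sum_(S : {set 'I_N}) F #|S| = \sum_(k < N.+1) F k *+ 'C(N, k).
Proof.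
have card_lt (S : {set 'I_N}) : (#|S| < N.+1)%N.
  by rewrite ltnS (leq_trans (max_card S)) ?card_ord.
rewrite (partition_big (fun S : {set 'I_N} => inord #|S| : 'I_N.+1) predT) //.
apply: eq_bigr => k _; rewrite (eq_bigr (fun _ => F k)); last first.
  by move=> S /eqP <-; rewrite inordK.
rewrite sumr_const; congr (_ *+ _).
have := card_draws 'I_N k; rewrite card_ord => <-.
by apply: eq_card => S; rewrite !inE unfold_in /= inordK.
Qed.

Lemma sum_nat_even_odd (V : nmodType) M (f : nat -> V) :
  \sum_(0 <= k < 2 * M) f k = \sum_(0 <= i < M) f (2 * i)%N + \sum_(0 <= i < M) f (2 * i).+1.
Proof.
elim: M => [|M IH]; first by rewrite !big_geq ?addr0.
by rewrite (_ : 2 * M.+1 = (2 * M).+2)%N ?mulnS // !big_nat_recr // IH addrACA addrA.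
Qed.

Section SplitAtMaximum.
Variable N : nat.
Implicit Types (S : {set 'I_N}) (l r t : seq nat).

Definition vals S : seq nat := [seq val i | i <- enum S].

Lemma mem_vals S (i : 'I_N) : (val i \in vals S) = (i \in S).
Proof. by rewrite mem_map ?mem_enum //; apply: val_inj. Qed.

Lemma vals_lt S v : v \in vals S -> (v < N)%N.
Proof. by case/mapP => i _ ->; apply: ltn_ord. Qed.

Lemma vals_uniq S : uniq (vals S).
Proof. by rewrite map_inj_uniq ?enum_uniq //; apply: val_inj. Qed.

Lemma size_vals S : size (vals S) = #|S|.
Proof. by rewrite size_map cardE. Qed.

Lemma vals_sorted S : sorted ltn (vals S).
Proof.
apply: (@subseq_sorted _ _ ltn_trans _ (iota 0 N)); last exact: iota_ltn_sorted.
by rewrite -val_enum_ord /vals enumT; apply/map_subseq/filter_subseq.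
Qed.

Lemma perm_vals_setC S : perm_eq (vals S ++ vals (~: S)) (iota 0 N).
Proof.
rewrite -map_cat -val_enum_ord; apply/perm_map/uniq_perm; rewrite ?enum_uniq //.
  rewrite cat_uniq !enum_uniq andbT /=; apply/hasPn => i.
  by rewrite !mem_enum inE => /negbTE ->.
by move=> i; rewrite mem_cat !mem_enum inE orbN.
Qed.

Lemma perm_cat_valsP S l r :
  reflect (perm_eq l (vals S) /\ perm_eq r (vals (~: S)))
          (perm_eq (l ++ r) (iota 0 N) && ([set i : 'I_N | val i \in l] == S)).
Proof.
apply: (iffP andP) => [[lr_iota /eqP <-{S}] | [l_S r_S]]; last first.
  split; first exact: perm_trans (perm_cat l_S r_S) (perm_vals_setC S).
  by apply/eqP/setP => i; rewrite inE (perm_mem l_S) mem_vals.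
have lr_uniq : uniq (l ++ r) by rewrite (perm_uniq lr_iota) iota_uniq.
have lr_lt v : (v \in l ++ r) = (v < N)%N by rewrite (perm_mem lr_iota) mem_iota.
have [l_uniq r_uniq] : uniq l /\ uniq r by move: lr_uniq; rewrite cat_uniq => /and3P[].
split; apply: uniq_perm; rewrite ?vals_uniq // => v.
  apply/idP/idP => [vl | /[dup] /vals_lt vN].
    have vN : (v < N)%N by rewrite -lr_lt mem_cat vl.
    by rewrite -[v]/(val (Ordinal vN)) mem_vals inE.
  by rewrite -[v]/(val (Ordinal vN)) mem_vals inE.
apply/idP/idP => [vr | /[dup] /vals_lt vN].
  have vN : (v < N)%N by rewrite -lr_lt mem_cat vr orbT.
  rewrite -[v]/(val (Ordinal vN)) mem_vals !inE /=.
  by move: lr_uniq; rewrite cat_uniq => /and3P[_ /hasPn/(_ v vr)].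
rewrite -[v]/(val (Ordinal vN)) mem_vals !inE /= => vl.
by move: (vN); rewrite -lr_lt mem_cat (negbTE vl).
Qed.

Lemma perm_eq_insert_max l r :
  perm_eq (l ++ N :: r) (iota 0 N.+1) = perm_eq (l ++ r) (iota 0 N).
Proof.
by rewrite -cat1s perm_catCA -addn1 iotaD cats1 perm_sym perm_rcons perm_cons perm_sym.
Qed.

Lemma sum_permutations_split_max (V : nmodType) (F : seq nat -> V) :
  \sum_(t <- permutations (iota 0 N.+1)) F t =
  \sum_S \sum_(l <- permutations (vals S)) \sum_(r <- permutations (vals (~: S)))
    F (l ++ N :: r).
Proof.
pose St t := [set i : 'I_N | val i \in take (index N t) t].
have St_cat l r : N \notin l -> St (l ++ N :: r) = [set i : 'I_N | val i \in l].
  move=> Nl; apply/setP => i; rewrite !inE index_cat (negbTE Nl) /= eqxx addn0.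
  by rewrite take_size_cat.
rewrite (partition_big St predT) //; apply: eq_bigr => S _.
rewrite -big_filter -(big_allpairs_dep (h := fun l r => l ++ N :: r)).
apply/perm_big/uniq_perm; first by rewrite filter_uniq ?permutations_uniq.
  apply: allpairs_uniq; rewrite ?permutations_uniq // => -[l1 r1] [l2 r2].
  move=> /allpairsP[[? ?] /= [l1S _ [-> ->]]] /allpairsP[[? ?] /= [l2S _ [-> ->]]] /=.
  rewrite !mem_permutations in l1S l2S.
  move/eqP; rewrite eqseq_cat; last by rewrite (perm_size l1S) (perm_size l2S).
  by case/andP => /eqP -> /eqP[->].
move=> t; rewrite mem_filter mem_permutations; apply/andP/allpairsP.
  case=> /eqP St_t t_iota.
  have Nt : N \in t by rewrite (perm_mem t_iota) mem_iota ltnS leqnn.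
  move: St_t t_iota; case/splitPr: Nt => l r St_t t_iota.
  have Nl : N \notin l.
    have : uniq (l ++ N :: r) by rewrite (perm_uniq t_iota) iota_uniq.
    by rewrite cat_uniq => /and3P[_ /hasPn/(_ N (mem_head _ _))].
  rewrite St_cat // in St_t; rewrite perm_eq_insert_max in t_iota.
  have /perm_cat_valsP[lS rS] : perm_eq (l ++ r) (iota 0 N) &&
                                ([set i : 'I_N | val i \in l] == S).
    by rewrite t_iota St_t eqxx.
  by exists (l, r); rewrite !mem_permutations.
case=> -[l r] /= [+ + ->]; rewrite !mem_permutations => lS rS.
have /andP[lr_iota /eqP St_l] := introT (perm_cat_valsP S l r) (conj lS rS).
have Nl : N \notin l by rewrite (perm_mem lS); apply/negP => /vals_lt; rewrite ltnn.
by rewrite St_cat // St_l eqxx perm_eq_insert_max.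
Qed.

End SplitAtMaximum.

Section DescentWeight.
Variable R : comPzRingType.
Implicit Types (p q : R) (s t : seq nat).

Fixpoint des_weight p q s : R :=
  if s is a :: ((c :: _) as t) then (if (c < a)%N then p else 1) * des_weight q p t
  else 1.

Definition des_count (b : bool) s : nat :=
  \sum_(1 <= i < size s) ((nth 0 s i.-1 > nth 0 s i)%N && (odd i == b)).

Lemma des_weight_cons2 p q a c t :
  des_weight p q [:: a, c & t] = (if (c < a)%N then p else 1) * des_weight q p (c :: t).
Proof. by []. Qed.

Lemma des_count_cons b a t :
  (des_count b (a :: t) = ((0 < size t) && (nth 0 t 0 < a) && b) + des_count (~~ b) t)%N.
Proof.
rewrite /des_count; case: t => [|c t] /=; first by rewrite !big_geq.
rewrite big_ltn // big_add1 /=; congr addn.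
by apply: eq_big_nat => -[|i] //= _; case: b; case: (odd i).
Qed.

Lemma des_weightE p q s : des_weight p q s = p ^+ des_count true s * q ^+ des_count false s.
Proof.
elim: s p q => [|a [|c t] IH] p q; try by rewrite /des_count !big_geq // mulr1.
rewrite des_weight_cons2 IH !(des_count_cons _ a) /= andbT andbF [(false + _)%N]/= exprD.
by case: (c < a)%N; rewrite ?expr1 ?expr0 ?mul1r; ring.
Qed.

Lemma des_weight_map (f : nat -> nat) p q u :
  {in u &, {mono f : a c / (a < c)%N}} -> des_weight p q (map f u) = des_weight p q u.
Proof.
elim: u p q => [|a [|c t] IH] p q // fmono.
rewrite map_cons des_weight_cons2 -map_cons IH ?fmono ?inE ?eqxx ?orbT //.
by move=> x y xu yu; apply: fmono; rewrite inE ?xu ?yu orbT.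
Qed.

Lemma des_weight_cat p q l x r : (last x l <= x)%N ->
  des_weight p q (l ++ x :: r) =
  des_weight p q l *
  (if odd (size l) then des_weight q p (x :: r) else des_weight p q (x :: r)).
Proof.
elim: l p q => [|a [|c l] IH] p q; first by rewrite mul1r.
  by rewrite /= ltnNge => ->; rewrite !mul1r.
move=> lx; transitivity ((if (c < a)%N then p else 1) * des_weight q p ((c :: l) ++ x :: r)).
  by [].
by rewrite IH // des_weight_cons2 mulrA /=; case: (odd (size l)).
Qed.

Definition rev_compl (m : nat) t := [seq m.-1 - v | v <- rev t]%N.

Lemma rev_complK m t : all (gtn m) t -> rev_compl m (rev_compl m t) = t.
Proof.
move=> /allP t_lt; rewrite /rev_compl -map_rev revK -map_comp -[RHS]map_id.
by apply/eq_in_map => v /t_lt /= vm; lia.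
Qed.

Lemma des_count_rev_compl m t b : size t = m -> odd m -> all (gtn m) t ->
  des_count b (rev_compl m t) = des_count (~~ b) t.
Proof.
move=> size_t odd_m /allP t_lt; rewrite /des_count size_map size_rev size_t.
have nth_rc i : (i < m)%N -> nth 0 (rev_compl m t) i = (m.-1 - nth 0 t (m - i.+1))%N.
  by move=> im; rewrite (nth_map 0) ?size_rev ?size_t // nth_rev ?size_t.
have nth_lt i : (i < m)%N -> (nth 0 t i < m)%N.
  by move=> im; apply/t_lt/mem_nth; rewrite size_t.
rewrite big_nat_rev /= [RHS]big_nat_cond [LHS]big_nat_cond.
apply: eq_bigr => i /andP[/andP[i_pos im] _]; rewrite add1n subSS.
have lt_i1 := nth_lt i.-1 (leq_ltn_trans (leq_pred i) im).
have lt_i := nth_lt i im.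
rewrite !nth_rc; try lia.
have -> : (m - (m - i).+1 = i.-1)%N by lia.
have -> : (m - (m - i).-1.+1 = i)%N by lia.
have -> : (m.-1 - nth 0 t i.-1 < m.-1 - nth 0 t i)%N = (nth 0 t i < nth 0 t i.-1)%N.
  by apply/idP/idP; lia.
by rewrite oddB ?odd_m; [case: b; case: (odd i) | lia].
Qed.

Lemma des_weight_rev_compl p q m t : size t = m -> odd m -> all (gtn m) t ->
  des_weight p q (rev_compl m t) = des_weight q p t.
Proof. by move=> *; rewrite !des_weightE !des_count_rev_compl // mulrC. Qed.

End DescentWeight.

Section RefinedEulerian.
Variable R : comPzRingType.
Implicit Types (p q : R) (s t : seq nat).

Lemma perm_word_perm_eq n (s : 'S_n) : perm_eq (perm_word s) (iota 0 n).
Proof.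
rewrite -val_enum_ord /perm_word (map_comp val s); apply/perm_map/uniq_perm.
- by rewrite map_inj_uniq ?enum_uniq //; apply: perm_inj.
- exact: enum_uniq.
by move=> x; rewrite mem_enum; apply/mapP; exists (s^-1 x)%g; rewrite ?mem_enum ?permKV.
Qed.

Lemma perm_word_inj n : injective (@perm_word n).
Proof.
move=> s1 s2 E; apply/permP => i; apply/val_inj.
have nthE (s : 'S_n) : nth 0 (perm_word s) i = s i.
  by rewrite (nth_map i) ?size_enum_ord // nth_ord_enum.
by rewrite /= -nthE E nthE.
Qed.

Lemma A_permutationsE n p q :
  A n p q = \sum_(t <- permutations (iota 0 n)) des_weight p q t.
Proof.
have codes (s : 'S_n) : p ^+ odes s * q ^+ edes s = des_weight p q (perm_word s).
  rewrite des_weightE /des_count size_map size_enum_ord.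
  by congr (_ ^+ _ * _ ^+ _); apply: eq_bigr => i _; case: (odd i).
rewrite /A; under eq_bigr do rewrite codes.
rewrite -big_image /=; apply/perm_big/uniq_perm_min_size.
- by rewrite map_inj_uniq ?enum_uniq //; apply: perm_word_inj.
- by move=> _ /mapP[s _ ->]; rewrite mem_permutations perm_word_perm_eq.
by rewrite size_map -cardE card_Sn size_permutations ?iota_uniq // size_iota.
Qed.

Lemma A0 p q : A 0 p q = 1.
Proof. by rewrite A_permutationsE big_seq1. Qed.

Lemma permutations_iota_lt m t : t \in permutations (iota 0 m) -> all (gtn m) t.
Proof.
by rewrite mem_permutations => /perm_mem t_iota; apply/allP => i; rewrite t_iota mem_iota.
Qed.

Lemma sum_permutations_sorted p q s : sorted ltn s ->
  \sum_(t <- permutations s) des_weight p q t = A (size s) p q.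
Proof.
move=> s_sorted; rewrite A_permutationsE; set m := size s; set f := nth 0 s.
have f_homo := sorted_ltn_nth ltn_trans 0 s_sorted.
have f_inj := incn_inj_in (leq_mono_in f_homo).
have Uimg : uniq (map (map f) (permutations (iota 0 m))).
  rewrite map_inj_in_uniq ?permutations_uniq // => u1 u2.
  by move=> /permutations_iota_lt u1m /permutations_iota_lt u2m; apply: (inj_in_map f_inj).
have img_perm : perm_eq (map (map f) (permutations (iota 0 m))) (permutations s).
  apply: uniq_perm_min_size Uimg _ _.
    move=> _ /mapP[u + ->]; rewrite !mem_permutations => u_iota.
    by rewrite -[X in perm_eq _ X](mkseq_nth 0 s); apply: perm_map.
  rewrite !size_map !size_permutations ?iota_uniq ?size_iota //.
  exact: (sorted_uniq ltn_trans ltnn s_sorted).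
rewrite -(perm_big _ img_perm) big_map; apply: eq_big_seq => u /permutations_iota_lt/allP u_lt.
apply: des_weight_map => i j /u_lt im /u_lt jm.
exact: leqW_mono_in (leq_mono_in f_homo) _ _ im jm.
Qed.

Lemma sum_permutations_cons_max p q x s : sorted ltn s -> all (gtn x) s ->
  \sum_(r <- permutations s) des_weight p q (x :: r) =
  if size s == 0%N then 1 else p * A (size s) q p.
Proof.
case: s => [|y s] s_sorted s_lt; first by rewrite big_seq1.
rewrite -sum_permutations_sorted // big_distrr; apply: eq_big_seq => -[|c r].
  by rewrite mem_permutations => /perm_size.
rewrite mem_permutations => /perm_mem cr_s; rewrite des_weight_cons2.
by move/allP: s_lt => /(_ c); rewrite -cr_s mem_head => /(_ isT) /= ->.
Qed.

Lemma rev_compl_permutations m t :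
  t \in permutations (iota 0 m) -> rev_compl m t \in permutations (iota 0 m).
Proof.
move=> /[dup] /permutations_iota_lt /allP t_lt; rewrite !mem_permutations => t_iota.
apply: uniq_perm_min_size.
- rewrite map_inj_in_uniq ?rev_uniq ?(perm_uniq t_iota) ?iota_uniq // => v w.
  by rewrite !mem_rev => /t_lt /= vm /t_lt /= wm; lia.
- by move=> _ /mapP[v /[!mem_rev] /t_lt /= vm ->]; rewrite mem_iota; lia.
by rewrite size_map size_rev (perm_size t_iota).
Qed.

Lemma A_sym_odd m p q : odd m -> A m p q = A m q p.
Proof.
move=> odd_m; rewrite !A_permutationsE.
have rc_perm : perm_eq (map (rev_compl m) (permutations (iota 0 m)))
                       (permutations (iota 0 m)).
  apply: uniq_perm_min_size; last by rewrite size_map.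
    rewrite map_inj_in_uniq ?permutations_uniq // => t1 t2.
    move=> /permutations_iota_lt t1m /permutations_iota_lt t2m rc12.
    by rewrite -(rev_complK t1m) rc12 rev_complK.
  by move=> _ /mapP[t t_iota ->]; apply: rev_compl_permutations.
rewrite -(perm_big _ rc_perm) big_map; apply: eq_big_seq => t t_iota.
apply: des_weight_rev_compl odd_m (permutations_iota_lt t_iota).
by move: t_iota; rewrite mem_permutations => /perm_size; rewrite size_iota.
Qed.

Lemma sum_split_max_set N (S : {set 'I_N}) p q :
  \sum_(l <- permutations (vals S)) \sum_(r <- permutations (vals (~: S)))
    des_weight p q (l ++ N :: r) =
  A #|S| p q * (if (N - #|S| == 0)%N then 1
                else if odd #|S| then q * A (N - #|S|)%N p q else p * A (N - #|S|)%N q p).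
Proof.
have vals_ltN (S' : {set 'I_N}) : all (gtn N) (vals S') by apply/allP => v /vals_lt.
transitivity (\sum_(l <- permutations (vals S)) des_weight p q l *
  \sum_(r <- permutations (vals (~: S)))
    (if odd #|S| then des_weight q p (N :: r) else des_weight p q (N :: r))).
  apply: eq_big_seq => l; rewrite mem_permutations => lS.
  rewrite big_distrr; apply: eq_big_seq => r _.
  rewrite des_weight_cat ?(perm_size lS) ?size_vals //.
  by have := mem_last N l; rewrite inE (perm_mem lS) => /predU1P[-> | /vals_lt/ltnW].
rewrite -big_distrl sum_permutations_sorted ?vals_sorted // size_vals; congr (_ * _).
have size_valsC : size (vals (~: S)) = (N - #|S|)%N.
  by rewrite size_vals cardsCs setCK card_ord.
by case: (odd _); rewrite sum_permutations_cons_max ?vals_sorted ?vals_ltN // size_valsC.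
Qed.

Lemma A_recS N p q :
  A N.+1 p q = A N p q + \sum_(0 <= k < N)
    'C(N, k)%:R * A k p q * (if odd k then q * A (N - k) p q else p * A (N - k) q p).
Proof.
rewrite A_permutationsE sum_permutations_split_max.
under eq_bigr do rewrite sum_split_max_set.
rewrite (@sum_set_card _ N (fun k => A k p q * (if (N - k == 0)%N then 1 else if odd k
  then q * A (N - k)%N p q else p * A (N - k)%N q p))).
rewrite big_ord_recr /= subnn binn mulr1 addrC big_mkord; congr (_ + _).
by apply: eq_bigr => k _; rewrite subn_eq0 leqNgt ltn_ord /= -mulrA mulr_natl.
Qed.

Lemma A_odd_rec n p q :
  A (2 * n + 1) p q =
    A (2 * n) p q
    + p * \sum_(0 <= i < n)
        ('C(2 * n, 2 * i))%:R * A (2 * i) p q * A (2 * n - 2 * i) q p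
    + q * \sum_(1 <= i < n.+1)
        ('C(2 * n, 2 * i - 1))%:R * A (2 * i - 1) p q * A (2 * n - 2 * i + 1) p q.
Proof.
rewrite addn1 A_recS sum_nat_even_odd -addrA !big_distrr big_add1 /=.
congr (_ + (_ + _)); apply: eq_big_nat => i /andP[_ lt_in]; rewrite oddM /= mulrCA //.
have -> : (2 * i.+1 - 1 = (2 * i).+1)%N by lia.
by have -> : (2 * n - 2 * i.+1 + 1 = 2 * n - (2 * i).+1)%N by lia.
Qed.

Lemma A_even_rec n p q : (1 <= n)%N ->
  A (2 * n) p q =
    (1 + p) * A (2 * n - 1) p q
    + (p + q) * \sum_(1 <= i < n)
        ('C(2 * n - 1, 2 * i - 1))%:R * A (2 * i - 1) p q * A (2 * n - 2 * i) p q.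
Proof.
case: n => // m _; set N := (2 * m.+1 - 1)%N.
have N_def : N = (2 * m).+1 by rewrite /N; lia.
pose O i := 'C(N, (2 * i).+1)%:R * A (2 * i).+1 p q * A (2 * m - 2 * i) p q.
have sumO : \sum_(1 <= i < m.+1) 'C(N, 2 * i - 1)%:R * A (2 * i - 1) p q *
              A (2 * m.+1 - 2 * i) p q = \sum_(0 <= i < m) O i.
  rewrite big_add1; apply: eq_big_nat => i _; rewrite /O.
  have -> : (2 * i.+1 - 1 = (2 * i).+1)%N by lia.
  by have -> : (2 * m.+1 - 2 * i.+1 = 2 * m - 2 * i)%N by lia.
pose T k := 'C(N, k)%:R * A k p q *
  (if odd k then q * A (N - k) p q else p * A (N - k) q p).
have recN : A N.+1 p q = A N p q + \sum_(0 <= k < N) T k := A_recS N p q.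
have T0 : T 0%N = p * A N p q.
  rewrite /T bin0 A0 subn0 mulr1n !mul1r (@A_sym_odd N q p) //.
  by rewrite N_def /= oddM.
have sum_odd : \sum_(0 <= i < m) T (2 * i).+1 = q * \sum_(0 <= i < m) O i.
  rewrite big_distrr; apply: eq_big_nat => i /andP[_ lt_im]; rewrite /T /O oddS oddM /=.
  by rewrite mulrCA (_ : N - (2 * i).+1 = 2 * m - 2 * i)%N //; lia.
have sum_even : \sum_(0 <= i < m) T (2 * i).+2 = p * \sum_(0 <= i < m) O i.
  rewrite big_distrr big_nat_rev; apply: eq_big_nat => i /andP[_ lt_im].
  rewrite /T /O add0n !oddS oddM /= mulrCA.
  have le_iN : ((2 * i).+1 <= N)%N by rewrite N_def; lia.
  rewrite (_ : (2 * (m - i.+1)).+2 = N - (2 * i).+1)%N; last by rewrite N_def; lia.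
  rewrite bin_sub // subKn // (@A_sym_odd (2 * i).+1 q p) ?oddS ?oddM //.
  by rewrite (_ : N - (2 * i).+1 = 2 * m - 2 * i)%N 1?mulrAC //; lia.
rewrite sumO (_ : 2 * m.+1 = N.+1)%N; last by rewrite N_def; lia.
rewrite recN big_ltn; last by rewrite N_def.
rewrite big_add1 (_ : N.-1 = 2 * m)%N; last by rewrite N_def.
by rewrite sum_nat_even_odd T0 sum_odd sum_even; ring.
Qed.

End RefinedEulerian.

Theorem lemma2p1 (R : comPzRingType) (p q : R) (n : nat) (hn : (1 <= n)%N) :
  A (2 * n) p q =
    (1 + p) * A (2 * n - 1) p q
    + (p + q) * \sum_(1 <= i < n)
        ('C(2 * n - 1, 2 * i - 1))%:R * A (2 * i - 1) p q * A (2 * n - 2 * i) p q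
  /\
  A (2 * n + 1) p q =
    A (2 * n) p q
    + p * \sum_(0 <= i < n)
        ('C(2 * n, 2 * i))%:R * A (2 * i) p q * A (2 * n - 2 * i) q p
    + q * \sum_(1 <= i < n.+1)
        ('C(2 * n, 2 * i - 1))%:R * A (2 * i - 1) p q * A (2 * n - 2 * i + 1) p q.
Proof. by split; [apply: A_even_rec | apply: A_odd_rec]. Qed.
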